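(* Let $a>0$, $\beta>0$, and let $\lambda$ be feasible. Then for every $0<\delta\le\delta_0$, \[ |g|^2\ge\begin{cases} 9\mathrm{e}^{-4ka}\dfrac{\delta^2}{(2\delta^2+\lambda\delta^{\beta+1})^2} & \text{for } 0\le k\le k_0(\delta),\\[0.4cm] \mathrm{e}^{-ka}\dfrac{\delta^2}{(2\delta^2+\lambda\delta^{\beta+1})^{1/2}} & \text{for } k\ge k_0(\delta). \end{cases} \]
   Context: For $0<\delta<1$ and constants $\beta>0$, $\lambda\in\mathbb{R}$, put $\mu=\delta+\lambda\delta^{\beta}$. The constant $\lambda$ is called feasible if $\lambda>0$ when $0<\beta<1$, $\lambda\ge -1$ when $\beta=1$, and $\lambda\neq 0$ when $\beta>1$. For feasible $\lambda$, $\delta_\mu=\delta_\mu(\beta,\lambda)\in(0,1)$ denotes a number such that $\mu\ge 0$ for all $0<\delta\le\delta_\mu$. For $k\in\mathbb{R}$ define \[ g=g(k,\delta)=\mathrm{i}\delta\left[1-\frac{(\delta+2\mathrm{i})(2\mathrm{i}-\lambda\delta^{\beta})}{\delta(2\delta+\lambda\delta^{\beta})}\mathrm{e}^{-2|k|a}\right], \qquad k_0(\delta)=\frac{1}{2a}\ln\!\left(\frac{1}{2\delta^2+\lambda\delta^{\beta+1}}\right), \] and let $0<\delta_0\le\delta_\mu$ be such that $k_0(\delta)>0$ for all $0<\delta\le\delta_0$. *)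

From Stdlib Require Import Reals.
From Coquelicot Require Import Coquelicot.
Open Scope R_scope.

Definition feasible (beta lam : R) : Prop :=
  (0 < beta < 1 /\ 0 < lam) \/ (beta = 1 /\ -1 <= lam) \/ (1 < beta /\ lam <> 0).

Definition mu (beta lam delta : R) : R := delta + lam * Rpower delta beta.

Definition g (a beta lam k delta : R) : C :=
  (Ci * RtoC delta *
   (1 - (RtoC delta + 2 * Ci) * (Ci * 2 - RtoC (lam * Rpower delta beta))
        / RtoC (delta * (2 * delta + lam * Rpower delta beta))
        * RtoC (exp (- 2 * Rabs k * a))))%C.

Definition k0 (a beta lam delta : R) : R :=
  / (2 * a) * ln (/ (2 * delta ^ 2 + lam * Rpower delta (beta + 1))).

(* Writing P = lam delta^beta, D = delta (2 delta + P) = 2 delta^2 + lam delta^(beta+1)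
   and E = exp(-2|k|a), one computes
     Im g = delta (1 + (delta P + 4) E / D).
   The assumption mu >= 0 gives P >= -delta, so D >= delta^2 > 0 and delta P + 4 >= 3
   (as delta < 1).  Hence |g|^2 >= (Im g)^2 is at least both (3 delta E / D)^2, which is
   the bound for small k, and delta^2, which dominates the bound for k >= k_0(delta)
   because there exp(-k a) <= sqrt D. *)
From Stdlib Require Import Reals Lra Psatz.
From Coquelicot Require Import Coquelicot.
Open Scope R_scope.

Lemma Im_g (a beta lam k delta : R) :
  delta <> 0 -> 2 * delta + lam * Rpower delta beta <> 0 ->
  Im (g a beta lam k delta) =
  delta * (1 + (delta * (lam * Rpower delta beta) + 4) * exp (- 2 * Rabs k * a)
                / (delta * (2 * delta + lam * Rpower delta beta))).
Proof.
  intros Hdelta HD. unfold g.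
  set (P := lam * Rpower delta beta) in *.
  set (E := exp (- 2 * Rabs k * a)).
  unfold Cdiv, Cminus, Cmult, Cplus, Copp, Cinv, RtoC, Ci, Im; simpl.
  field; split; assumption.
Qed.

Lemma Cmod_sqr_ge_Im_sqr (z : C) : Im z ^ 2 <= Cmod z ^ 2.
Proof. rewrite Cmod2_alt. pose proof (pow2_ge_0 (Re z)). lra. Qed.

Lemma Rpower_succ_mul (x y : R) : 0 < x -> Rpower x (y + 1) = x * Rpower x y.
Proof. intros Hx. rewrite Rpower_plus, Rpower_1 by exact Hx. ring. Qed.

Lemma exp_neg_mul_le_sqrt (a k D : R) :
  0 < a -> 0 < D -> k >= / (2 * a) * ln (/ D) -> exp (- k * a) <= sqrt D.
Proof.
  intros Ha HD Hk.
  rewrite <- Rpower_sqrt by exact HD. unfold Rpower.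
  rewrite ln_Rinv in Hk by exact HD.
  assert (Hexp : - k * a <= / 2 * ln D).
  { apply (Rmult_ge_compat_r (2 * a)) in Hk; [|lra].
    replace (/ (2 * a) * - ln D * (2 * a)) with (- ln D) in Hk by (field; lra).
    lra. }
  destruct (Rle_lt_or_eq_dec _ _ Hexp) as [Hlt | ->].
  - left. exact (exp_increasing _ _ Hlt).
  - lra.
Qed.

Section Bounds.

Variables (delta P E D : R).
Hypotheses (Hdelta : 0 < delta) (HE : 0 < E) (HD : 0 < D) (HP : 3 <= delta * P + 4).

Let Img := delta * (1 + (delta * P + 4) * E / D).

Lemma Img_ge_delta : delta <= Img.
Proof.
  assert (0 <= (delta * P + 4) * E / D).
  { apply Rmult_le_pos; [nra | left; apply Rinv_0_lt_compat, HD]. }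
  unfold Img. nra.
Qed.

Lemma Img_sqr_ge_small_k : 9 * (E * E) * delta ^ 2 / D ^ 2 <= Img ^ 2.
Proof.
  assert (Hu : 3 * E / D <= (delta * P + 4) * E / D).
  { apply Rmult_le_compat_r; [left; apply Rinv_0_lt_compat, HD | nra]. }
  assert (Hu0 : 0 <= 3 * E / D).
  { apply Rmult_le_pos; [lra | left; apply Rinv_0_lt_compat, HD]. }
  replace (9 * (E * E) * delta ^ 2 / D ^ 2) with ((delta * (3 * E / D)) ^ 2)
    by (field; lra).
  apply pow_incr. unfold Img. split; nra.
Qed.

Lemma Img_sqr_ge_large_k (x : R) :
  0 < x <= sqrt D -> x * delta ^ 2 / sqrt D <= Img ^ 2.
Proof.
  intros Hx.
  assert (Hs : 0 < sqrt D) by (apply sqrt_lt_R0; exact HD).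
  apply Rle_trans with (delta ^ 2).
  - apply (Rmult_le_reg_r (sqrt D)); [exact Hs|].
    unfold Rdiv. rewrite Rmult_assoc, Rinv_l by lra.
    nra.
  - apply pow_incr. pose proof Img_ge_delta. lra.
Qed.

End Bounds.

Theorem lemma5p1 (a beta lam delta_mu delta0 : R)
  (ha : 0 < a) (hbeta : 0 < beta) (hlam : feasible beta lam)
  (hdmu : 0 < delta_mu < 1)
  (hmu : forall d, 0 < d <= delta_mu -> 0 <= mu beta lam d)
  (hd0 : 0 < delta0 <= delta_mu)
  (hk0 : forall d, 0 < d <= delta0 -> 0 < k0 a beta lam d) :
  forall delta, 0 < delta <= delta0 ->
    (forall k, 0 <= k <= k0 a beta lam delta ->
       (Cmod (g a beta lam k delta)) ^ 2 >=
       9 * exp (- 4 * k * a) * delta ^ 2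
         / (2 * delta ^ 2 + lam * Rpower delta (beta + 1)) ^ 2) /\
    (forall k, k >= k0 a beta lam delta ->
       (Cmod (g a beta lam k delta)) ^ 2 >=
       exp (- k * a) * delta ^ 2
         / sqrt (2 * delta ^ 2 + lam * Rpower delta (beta + 1))).
Proof.
  intros d Hd.
  pose proof (hmu d ltac:(lra)) as Hmu. unfold mu in Hmu.
  set (P := lam * Rpower d beta) in *.
  set (D := d * (2 * d + P)).
  assert (HDe : 2 * d ^ 2 + lam * Rpower d (beta + 1) = D).
  { rewrite Rpower_succ_mul by lra. unfold D, P. ring. }
  assert (HD : 0 < D) by (unfold D; nra).
  assert (HP : 3 <= d * P + 4) by nra.
  pose proof (fun k => Im_g a beta lam k d ltac:(lra) ltac:(fold P; lra)) as HIm.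
  fold P D in HIm.
  unfold k0. rewrite HDe. split; intros k Hk; apply Rle_ge;
    refine (Rle_trans _ _ _ _ (Cmod_sqr_ge_Im_sqr _)); rewrite HIm.
  - rewrite Rabs_right by lra.
    replace (exp (- 4 * k * a)) with (exp (- 2 * k * a) * exp (- 2 * k * a))
      by (rewrite <- exp_plus; f_equal; ring).
    apply Img_sqr_ge_small_k; [lra | apply exp_pos | exact HD | exact HP].
  - apply Img_sqr_ge_large_k; [lra | apply exp_pos | exact HD | exact HP |].
    split; [apply exp_pos | exact (exp_neg_mul_le_sqrt a k D ha HD Hk)].
Qed.
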